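(* For any integer $\delta$ and any bipartition $\lambda$, $\delta$ equals the number of vertices labelled $\times$ minus the number of vertices labelled $\bigcirc$ in the weight diagram $x_\lambda(\delta)$.
   Context: A partition is a weakly decreasing sequence $\alpha=(\alpha_1,\alpha_2,\dots)$ of nonnegative integers, almost all zero. A bipartition is a pair $\lambda=(\lambda^\bullet,\lambda^\circ)$ of partitions. Set $I_\wedge(\lambda)=\{\lambda^\bullet_i-(i-1): i\ge1\}$ and $I_\vee(\lambda,\delta)=\{i-\delta-\lambda^\circ_i: i\ge1\}$. The weight diagram $x_\lambda(\delta)$ labels each integer $j$ by: - $\bigcirc$ if $j\notin I_\wedge(\lambda)\cup I_\vee(\lambda,\delta)$; - $\wedge$ if $j\in I_\wedge(\lambda)\setminus I_\vee(\lambda,\delta)$; - $\vee$ if $j\in I_\vee(\lambda,\delta)\setminus I_\wedge(\lambda)$; - $\times$ if $j\in I_\wedge(\lambda)\cap I_\vee(\lambda,\delta)$. (Only finitely many vertices are labelled $\times$ or $\bigcirc$.) *)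

From mathcomp Require Import all_boot all_order all_algebra.
Set Implicit Arguments. Unset Strict Implicit. Unset Printing Implicit Defensive.
Import GRing.Theory Num.Theory.
Local Open Scope ring_scope.

(* A partition alpha = (alpha_1, alpha_2, ...) is represented by a finite
   sequence s : seq nat, weakly decreasing, with alpha_(i+1) = nth 0 s i
   (all entries beyond size s are 0). *)
Definition is_partition (s : seq nat) : Prop := sorted geq s.

Definition part (s : seq nat) (i : nat) : nat := nth 0%N s i.-1.

(* A bipartition lambda = (lambda^bullet, lambda^circ). *)
Definition bipartition := (seq nat * seq nat)%type.
Definition is_bipartition (lam : bipartition) : Prop :=
  is_partition lam.1 /\ is_partition lam.2.

Definition in_I_wedge (lam : bipartition) (j : int) : Prop :=
  exists i : nat, (1 <= i)%N /\ j = (part lam.1 i)%:Z - (i.-1)%:Z.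

Definition in_I_vee (lam : bipartition) (delta : int) (j : int) : Prop :=
  exists i : nat, (1 <= i)%N /\ j = i%:Z - delta - (part lam.2 i)%:Z.

Inductive label := Circ | Wedge | Vee | Cross.

Definition has_label (lam : bipartition) (delta : int) (j : int) (l : label)
  : Prop :=
  match l with
  | Circ  => ~ in_I_wedge lam j /\ ~ in_I_vee lam delta j
  | Wedge => in_I_wedge lam j /\ ~ in_I_vee lam delta j
  | Vee   => ~ in_I_wedge lam j /\ in_I_vee lam delta j
  | Cross => in_I_wedge lam j /\ in_I_vee lam delta j
  end.

From mathcomp Require Import all_boot all_order all_algebra zify.
Import GRing.Theory.
Local Open Scope ring_scope.
Set Implicit Arguments.
Unset Strict Implicit.

(* Both index sets are injective images of the positive integers: i |-> lambda^bullet_i - (i-1)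
   decreases strictly and i |-> i - delta - lambda^circ_i increases strictly.  Pick M so large
   that both partitions vanish beyond index M and all their parts are small compared to M.
   Inside the window [-M, M] the wedge set then has exactly M + 1 points and the vee set exactly
   M + delta points, while every integer below -M is a wedge only and every integer above M a
   vee only.  So crosses and circles all lie in the window, and by inclusion-exclusion
   #crosses - #circles = (M + 1) + (M + delta) - (2M + 1) = delta. *)

Lemma sorted_geq_nth (s : seq nat) (k k' : nat) :
  sorted geq s -> (k <= k')%N -> (nth 0 s k' <= nth 0 s k)%N.
Proof.
move=> s_sorted le_kk'; have [lt_k's | ge_k's] := ltnP k' (size s); last first.
  by rewrite nth_default.
have geq_trans : transitive geq by move=> x y z /= ? ?; lia.
apply: (sorted_leq_nth geq_trans (@leqnn) 0 s_sorted) => //; rewrite inE; lia.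
Qed.

Lemma sorted_geq_nth_head (s : seq nat) (k : nat) :
  sorted geq s -> (nth 0 s k <= head 0 s)%N.
Proof. by move=> s_sorted; rewrite -nth0; apply: sorted_geq_nth. Qed.

(* The k-th point (k = i - 1 >= 0) of I_wedge and of I_vee. *)
Definition wedge_point (s : seq nat) (k : nat) : int := (nth 0%N s k)%:Z - k%:Z.
Definition vee_point (s : seq nat) (delta : int) (k : nat) : int :=
  k.+1%:Z - delta - (nth 0%N s k)%:Z.

Lemma in_I_wedgeE (lam : bipartition) (j : int) :
  in_I_wedge lam j <-> exists k, j = wedge_point lam.1 k.
Proof.
split=> [[i [i_gt0 ->]] | [k ->]]; first by exists i.-1; rewrite /wedge_point.
by exists k.+1.
Qed.

Lemma in_I_veeE (lam : bipartition) (delta j : int) :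
  in_I_vee lam delta j <-> exists k, j = vee_point lam.2 delta k.
Proof.
split=> [[i [i_gt0 ->]] | [k ->]]; last by exists k.+1.
by exists i.-1; rewrite /vee_point /part prednK.
Qed.

Lemma wedge_point_inj (s : seq nat) : sorted geq s -> injective (wedge_point s).
Proof.
move=> s_sorted k k'; rewrite /wedge_point.
have [lt_kk' | lt_k'k | //] := ltngtP k k'.
- by have := sorted_geq_nth s_sorted (ltnW lt_kk'); lia.
- by have := sorted_geq_nth s_sorted (ltnW lt_k'k); lia.
Qed.

Lemma vee_point_inj (s : seq nat) (delta : int) :
  sorted geq s -> injective (vee_point s delta).
Proof.
move=> s_sorted k k'; rewrite /vee_point.
have [lt_kk' | lt_k'k | //] := ltngtP k k'.
- by have := sorted_geq_nth s_sorted (ltnW lt_kk'); lia.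
- by have := sorted_geq_nth s_sorted (ltnW lt_k'k); lia.
Qed.

Definition window (M : nat) : seq int := [seq k%:Z - M%:Z | k <- iota 0 (2 * M).+1].

Lemma mem_window (M : nat) (j : int) : (j \in window M) = (- M%:Z <= j <= M%:Z).
Proof.
apply/mapP/idP => [[k] | j_in]; first by rewrite mem_iota => k_lt ->; lia.
by exists (absz (j + M%:Z)); rewrite ?mem_iota; lia.
Qed.

Lemma window_uniq (M : nat) : uniq (window M).
Proof. by rewrite map_inj_uniq ?iota_uniq // => k k' /=; lia. Qed.

Lemma size_window (M : nat) : size (window M) = (2 * M).+1.
Proof. by rewrite size_map size_iota. Qed.

Lemma wedge_point_window (s : seq nat) (M : nat) (j : int) : (size s <= M)%N ->
  (exists k, j = wedge_point s k) <->
  j \in map (wedge_point s) (iota 0 M.+1) \/ j < - M%:Z.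
Proof.
move=> size_s; split=> [[k ->] | [/mapP [k _ ->] | j_lt]].
- have [le_kM | lt_Mk] := leqP k M; first by left; apply: map_f; rewrite mem_iota.
  by right; rewrite /wedge_point nth_default; lia.
- by exists k.
- by exists (absz j); rewrite /wedge_point nth_default; lia.
Qed.

Lemma vee_point_window (s : seq nat) (delta : int) (N : nat) (j : int) :
  (size s <= N)%N ->
  (exists k, j = vee_point s delta k) <->
  j \in map (vee_point s delta) (iota 0 N) \/ N%:Z - delta < j.
Proof.
move=> size_s; split=> [[k ->] | [/mapP [k _ ->] | j_gt]].
- have [lt_kN | le_Nk] := ltnP k N; first by left; apply: map_f; rewrite mem_iota.
  by right; rewrite /vee_point nth_default; lia.
- by exists k.
- by exists (absz (j + delta - 1)%R); rewrite /vee_point nth_default; lia.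
Qed.

Lemma wedge_points_sub_window (s : seq nat) (M : nat) :
  sorted geq s -> (head 0 s <= M)%N ->
  {subset map (wedge_point s) (iota 0 M.+1) <= window M}.
Proof.
move=> s_sorted head_s j /mapP [k]; rewrite mem_iota mem_window => k_lt ->.
by have := sorted_geq_nth_head k s_sorted; rewrite /wedge_point; lia.
Qed.

Lemma vee_points_sub_window (s : seq nat) (delta : int) (M N : nat) :
  sorted geq s -> (head 0%N s)%:Z + delta <= M%:Z -> N%:Z = M%:Z + delta ->
  {subset map (vee_point s delta) (iota 0 N) <= window M}.
Proof.
move=> s_sorted head_s N_def j /mapP [k]; rewrite mem_iota mem_window => k_lt ->.
by have := sorted_geq_nth_head k s_sorted; rewrite /vee_point; lia.
Qed.

Lemma size_filter_inter_outside (T : eqType) (W A B : seq T) :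
  uniq W -> uniq A -> uniq B -> {subset A <= W} -> {subset B <= W} ->
  (size [seq x <- A | x \in B] + size W
   = size A + size B + size [seq x <- W | (x \notin A) && (x \notin B)])%N.
Proof.
move=> W_uniq A_uniq B_uniq A_sub B_sub.
have perm_filter_mem C : uniq C -> {subset C <= W} -> perm_eq C (filter (mem C) W).
  move=> C_uniq C_sub; apply: uniq_perm; rewrite ?filter_uniq // => x.
  by rewrite mem_filter; apply/idP/andP => [x_in | []//]; split; last exact: C_sub.
rewrite !size_filter (permP (perm_filter_mem A A_uniq A_sub)) count_filter.
rewrite (perm_size (perm_filter_mem A A_uniq A_sub)) (perm_size (perm_filter_mem B B_uniq B_sub)).
rewrite !size_filter -(count_predC (predU (mem A) (mem B)) W).
have := count_predUI (mem A) (mem B) W.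
have -> : count (predI (mem B) (mem A)) W = count (predI (mem A) (mem B)) W.
  by apply: eq_count => x /=; rewrite andbC.
have -> : count (fun x => (x \notin A) && (x \notin B)) W
          = count (predC (predU (mem A) (mem B))) W.
  by apply: eq_count => x /=; rewrite negb_or.
lia.
Qed.

Section CrossesAndCircles.

Variables (M : nat) (P Q : int -> Prop) (A B : seq int).
Hypothesis PE : forall j, P j <-> j \in A \/ j < - M%:Z.
Hypothesis QE : forall j, Q j <-> j \in B \/ M%:Z < j.
Hypothesis A_sub : {subset A <= window M}.
Hypothesis B_sub : {subset B <= window M}.

Lemma mem_crosses (j : int) : j \in [seq x <- A | x \in B] <-> P j /\ Q j.
Proof.
rewrite mem_filter PE QE; split=> [/andP [j_B j_A] | [[j_A | j_lt] [j_B | j_gt]]].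
- by split; left.
- by rewrite j_A j_B.
- by have := A_sub j_A; rewrite mem_window; lia.
- by have := B_sub j_B; rewrite mem_window; lia.
- lia.
Qed.

Lemma mem_circles (j : int) :
  j \in [seq x <- window M | (x \notin A) && (x \notin B)] <-> ~ P j /\ ~ Q j.
Proof.
rewrite mem_filter mem_window PE QE.
split=> [/andP [/andP [j_A j_B] j_in] | [nP nQ]].
  split=> -[j_AB | j_out]; [by rewrite j_AB in j_A | lia | by rewrite j_AB in j_B | lia].
have [j_A | j_A] := boolP (j \in A); first by case: nP; left.
have [j_B | j_B] := boolP (j \in B); first by case: nQ; left.
have j_ge : ~ j < - M%:Z by move=> ?; apply: nP; right.
have j_le : ~ M%:Z < j by move=> ?; apply: nQ; right.
by rewrite /=; lia.
Qed.

End CrossesAndCircles.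

Theorem corollary2p2 (delta : int) (lam : bipartition) :
  is_bipartition lam ->
  exists sX sO : seq int,
    [/\ uniq sX, uniq sO,
        (forall j : int, j \in sX <-> has_label lam delta j Cross),
        (forall j : int, j \in sO <-> has_label lam delta j Circ)
      & delta = (size sX)%:Z - (size sO)%:Z].
Proof.
case: lam => lb lc; rewrite /is_bipartition /is_partition /= => -[lb_sorted lc_sorted].
set M : nat := (size lb + size lc + head 0%N lb + head 0%N lc + absz delta).+1.
set N : nat := absz (M%:Z + delta).
have N_def : N%:Z = M%:Z + delta by rewrite /N /M; lia.
set A := map (wedge_point lb) (iota 0 M.+1).
set B := map (vee_point lc delta) (iota 0 N).
have wedgeE j : in_I_wedge (lb, lc) j <-> j \in A \/ j < - M%:Z.
  by rewrite in_I_wedgeE; apply: wedge_point_window; rewrite /M /=; lia.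
have veeE j : in_I_vee (lb, lc) delta j <-> j \in B \/ M%:Z < j.
  rewrite in_I_veeE (@vee_point_window _ _ N) /=; last by rewrite /N /M; lia.
  by rewrite N_def addrK.
have A_sub : {subset A <= window M} by apply: wedge_points_sub_window; rewrite /M; lia.
have B_sub : {subset B <= window M} by apply: vee_points_sub_window; rewrite /M; lia.
have A_uniq : uniq A by rewrite map_inj_uniq ?iota_uniq //; exact: wedge_point_inj.
have B_uniq : uniq B by rewrite map_inj_uniq ?iota_uniq //; exact: vee_point_inj.
exists [seq x <- A | x \in B], [seq x <- window M | (x \notin A) && (x \notin B)].
split=> [||j|j|].
- by rewrite filter_uniq.
- by rewrite filter_uniq // window_uniq.
- exact: mem_crosses wedgeE veeE A_sub B_sub j.
- exact: mem_circles wedgeE veeE j.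
have := size_filter_inter_outside (window_uniq M) A_uniq B_uniq A_sub B_sub.
rewrite size_window !size_map !size_iota.
(* [set] identifies the [size] of the lemma, taken at [Equality.sort int], with the one at [int]. *)
set n_crosses := size (filter _ A); set n_circles := size (filter _ (window M)).
lia.
Qed.
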